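(* Let $d\ge 1$ and $h\ge 1$ be integers, let $T$ be the complete $d$-ary tree of height $h$, and let $v$ be a leaf of $T$. For every integer $0\le l\le h$, the hitting time from the ancestor of $v$ at distance $l$ from $v$ to $v$ is $g_{h,h}(d)-g_{h,h-l}(d)$.
   Context: The complete $d$-ary tree of height $h$ is the rooted tree in which every vertex at depth less than $h$ has exactly $d$ children and every vertex at depth $h$ is a leaf; the ancestors of $v$ are the vertices on the path from $v$ to the root (including $v$). For a positive integer $k$ and nonnegative integer $m$ define $g_{k,0}(d)=0$ and, for $m\ge 1$, $g_{k,m}(d)=\left(\sum_{i=0}^{m-1}(2m-2i)d^{k-i}\right)-m$. A simple random walk moves at each step to a uniformly random neighbor; the hitting time from $x$ to $y$ is the expected number of steps for a simple random walk started at $x$ to first reach $y$. *)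

From HB Require Import structures.
From mathcomp Require Import all_boot all_order all_algebra.
From mathcomp Require Import all_classical all_reals all_analysis.
Set Implicit Arguments. Unset Strict Implicit. Unset Printing Implicit Defensive.
Import Order.TTheory GRing.Theory Num.Theory.
Import numFieldNormedType.Exports.
Local Open Scope classical_set_scope.
Local Open Scope ring_scope.

(* srw_surv e y n x = probability that the simple random walk started at x
   has not reached y during steps 0..n, i.e. P_x(tau_y > n), where
   tau_y is the first time the walk is at y. *)
Fixpoint srw_surv {R : realType} {T : finType} (e : rel T) (y : T) (n : nat)
  (x : T) : R :=
  match n with
  | 0 => (x != y)%:R
  | n'.+1 => if x == y then 0
             else (\sum_(z | e x z) srw_surv e y n' z) / (#|[pred z | e x z]|)%:R
  end.

(* The expected hitting time from x to y is E_x[tau_y] = sum_{n>=0} P_x(tau_y > n).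
   [hitting_time_is e x y t] says this series converges and its sum is t. *)
Definition hitting_time_is {R : realType} {T : finType} (e : rel T) (x y : T)
  (t : R) : Prop :=
  series (fun n => srw_surv e y n x) @ \oo --> t.

(* A vertex is the word (sequence of child indices in 'I_d) describing the
   path from the root; its length k <= h is its depth. The root is [::]. *)
Definition tvert (d h : nat) : finType := {k : 'I_h.+1 & k.-tuple 'I_d}.
Definition vword {d h : nat} (x : tvert d h) : seq 'I_d := tagged x.

Definition is_child {d : nat} (s t : seq 'I_d) : bool :=
  (size t == (size s).+1) && (s == take (size s) t).

Definition tree_adj (d h : nat) : rel (tvert d h) :=
  fun x y => is_child (vword x) (vword y) || is_child (vword y) (vword x).

Definition g {R : realType} (k m d : nat) : R :=
  (\sum_(i < m) ((2 * m - 2 * i)%N)%:R * (d%:R) ^+ (k - i)) - m%:R.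
Arguments tree_adj d h : clear implicits.
Arguments g {R} k m d.

(* The expected hitting time of [y] is the unique function [f] vanishing at [y]
   with [f = 1 + (mean of f over the neighbours)] elsewhere: the truncated
   hitting times increase to a solution [L] lying below every nonnegative
   solution [f], and [f - L] is harmonic off [y], so the maximum principle
   forces [f = L].  On the complete d-ary tree with target a leaf [v] the
   solution is explicit: a vertex first climbs to the depth [a] where its path
   to the root leaves the path to [v], each step up from depth [j] taking
   [2 |subtree| - 1] expected steps, and from there the walk needs
   [g_{h,h} - g_{h,a}] more.  The mean-value identities then reduce to
   [S (n+1) = 1 + d S n] for the subtree sizes [S n = 1 + d + ... + d^n]. *)

From HB Require Import structures.
From mathcomp Require Import all_boot all_order all_algebra.
From mathcomp Require Import all_classical all_reals all_analysis.
From mathcomp Require Import zify ring lra.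
Import Order.TTheory GRing.Theory Num.Theory.
Import numFieldNormedType.Exports.
Local Open Scope classical_set_scope.
Local Open Scope ring_scope.
Set Implicit Arguments. Unset Strict Implicit. Unset Printing Implicit Defensive.

Definition nbr_avg (R : realType) (T : finType) (e : rel T) (f : T -> R) (x : T) : R :=
  (\sum_(z | e x z) f z) / #|[pred z | e x z]|%:R.

(* [trunc_hit e y n x] is E_x[min(tau_y, n)]. *)
Definition trunc_hit {R : realType} {T : finType} (e : rel T) (y : T) (n : nat)
    (x : T) : R :=
  series (fun k => srw_surv e y k x) n.

Section RandomWalk.
Variables (R : realType) (T : finType) (e : rel T) (y : T).
Implicit Types (f : T -> R) (x : T).
Local Notation trunc := (@trunc_hit R T e y).

Lemma srw_surv_ge0 n x : 0 <= srw_surv (R:=R) e y n x.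
Proof.
elim: n x => [|n IH] x /=; first by case: (x != y).
by case: (x == y) => //; apply: divr_ge0 => //; apply: sumr_ge0.
Qed.

Lemma nbr_avg_eq_max f x z :
  f x = nbr_avg e f x -> (forall w, e x w -> f w <= f x) -> e x z -> f z = f x.
Proof.
move=> fx fmax exz.
have deg_gt0 : (0 < #|[pred w | e x w]|)%N by apply/card_gt0P; exists z.
have gap_sum0 : \sum_(w | e x w) (f x - f w) = 0.
  rewrite sumrB (sumr_const [pred w | e x w]) -mulr_natr {1}fx /nbr_avg.
  by rewrite mulfVK ?subrr // pnatr_eq0 -lt0n.
apply/esym/eqP; rewrite -subr_eq0; apply/eqP.
by apply: (psumr_eq0P _ gap_sum0 exz) => w /fmax; rewrite subr_ge0.
Qed.

Lemma harmonic_le_target f (dist : T -> nat) :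
  (forall x, x != y -> f x = nbr_avg e f x) ->
  (forall x, x != y -> exists2 z, e x z & (dist z < dist x)%N) ->
  forall x, f x <= f y.
Proof.
move=> f_harm descent.
case: (arg_maxP f (erefl true : xpredT y)) => x0 _ f_max.
suff reach n x : (dist x <= n)%N -> f x = f x0 -> f y = f x0.
  by move=> x; rewrite (reach (dist x0) x0) //; apply: f_max.
elim: n x => [|n IH] x dx fx; case: (eqVneq x y) => [<- //|xy].
  by have [z _] := descent x xy; rewrite ltnNge (leq_trans dx).
have [z exz dz] := descent x xy.
apply: (IH z); first by rewrite -ltnS (leq_trans dz).
rewrite -fx; apply: nbr_avg_eq_max exz; first exact: f_harm.
by move=> w _; rewrite fx; apply: f_max.
Qed.

Lemma trunc_hit0 x : trunc 0 x = 0.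
Proof. by rewrite /trunc_hit /series /= big_nil. Qed.

Lemma trunc_hitS n x :
  trunc n.+1 x = if x == y then 0 else 1 + nbr_avg e (trunc n) x.
Proof.
rewrite /trunc_hit /series /= big_nat_recl //=.
case: (eqVneq x y) => [_|xy] /=; first by rewrite big1_eq addr0.
by rewrite /nbr_avg -mulr_suml exchange_big.
Qed.

Lemma trunc_hit_le f n x :
  (forall x, 0 <= f x) -> (forall x, x != y -> 1 + nbr_avg e f x <= f x) ->
  trunc n x <= f x.
Proof.
move=> f_ge0 f_super; elim: n x => [|n IH] x; first by rewrite trunc_hit0.
rewrite trunc_hitS; case: eqP => [_|/eqP xy]; first exact: f_ge0.
apply: le_trans (f_super x xy); rewrite lerD2l ler_wpM2r ?invr_ge0 //.
exact: ler_sum.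
Qed.

Lemma nondecreasing_trunc_hit x : nondecreasing_seq (trunc ^~ x).
Proof.
apply/nondecreasing_seqP => n; rewrite /trunc_hit /series /= big_nat_recr //=.
by rewrite lerDl srw_surv_ge0.
Qed.

Lemma trunc_hit_lim (L : T -> R) :
  (forall x, trunc ^~ x @ \oo --> L x) ->
  L y = 0 /\ forall x, x != y -> L x = 1 + nbr_avg e L x.
Proof.
move=> cvgL; split.
  have const0 : trunc ^~ y = fun=> 0.
    by apply: funext => -[|n]; rewrite ?trunc_hit0 // trunc_hitS eqxx.
  have := cvgL y; rewrite const0 => cvg0.
  exact/esym/(cvg_unique _ (cvg_cst 0) cvg0).
move=> x xy.
have cvg_shifted : (fun n => trunc n.+1 x) @ \oo --> L x.
  by rewrite (cvg_shiftS (trunc ^~ x)); apply: cvgL.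
have cvg_avg : (fun n => trunc n.+1 x) @ \oo --> 1 + nbr_avg e L x.
  under eq_cvg do rewrite trunc_hitS (negbTE xy).
  apply: cvgD; first exact: cvg_cst.
  apply: cvgMr_tmp; apply: (cvg_big (op := +%R) (x0 := 0)).
    exact: add_continuous.
  by move=> z _; apply: cvgL.
exact: (cvg_unique _ cvg_shifted cvg_avg).
Qed.

Lemma hitting_time_is_solution f (dist : T -> nat) :
  f y = 0 -> (forall x, 0 <= f x) ->
  (forall x, x != y -> f x = 1 + nbr_avg e f x) ->
  (forall x, x != y -> exists2 z, e x z & (dist z < dist x)%N) ->
  forall x, hitting_time_is e x y (f x).
Proof.
move=> fy f_ge0 f_sol descent.
have bounded n x : trunc n x <= f x.
  by apply: trunc_hit_le => // z /f_sol ->.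
have cvg_trunc x : cvgn (trunc ^~ x).
  apply: nondecreasing_is_cvgn (nondecreasing_trunc_hit x) _.
  by exists (f x) => _ [n _ <-].
pose L x := limn (trunc ^~ x).
have [Ly L_sol] := @trunc_hit_lim L cvg_trunc.
have L_le x : L x <= f x by apply: limr_le => //; near=> n; apply: bounded.
have gap_le x : f x - L x <= f y - L y.
  apply: (@harmonic_le_target (fun z => f z - L z) dist) => // z zy.
  rewrite f_sol // L_sol // /nbr_avg sumrB mulrBl; lra.
move=> x; have -> : f x = L x by have := gap_le x; have := L_le x; lra.
exact: cvg_trunc.
Unshelve. all: by end_near.
Qed.

End RandomWalk.

Section CommonPrefix.
Variable T : eqType.
Implicit Types s t : seq T.

Fixpoint lcp s t : nat :=
  match s, t with
  | x :: s', y :: t' => if x == y then (lcp s' t').+1 else 0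
  | _, _ => 0
  end.

Lemma lcp_le_size s t : (lcp s t <= size s)%N.
Proof. by elim: s t => [|a s IH] [|b t] //=; case: (a == b) => //; apply: IH. Qed.

Lemma lcp_take m s t : lcp (take m s) t = minn m (lcp s t).
Proof.
elim: s m t => [|a s IH] [|m] [|b t] //=; rewrite ?minn0 ?min0n //.
by case: (a == b); rewrite ?minn0 // IH minnSS.
Qed.

Lemma lcp_refl t : lcp t t = size t.
Proof. by elim: t => //= a t ->; rewrite eqxx. Qed.

Lemma lcp_full s t : lcp s t = size s -> s = take (size s) t.
Proof.
elim: s t => [|a s IH] [|b t] //=; case: (eqVneq a b) => [->|//].
by case=> /IH {1}->.
Qed.

Lemma lcp_rcons s t i :
  lcp (rcons s i) t =
  if lcp s t == size s then
    (if (size s < size t)%N && (nth i t (size s) == i) then (size s).+1 else size s)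
  else lcp s t.
Proof.
elim: s t => [|a s IH] [|b t] //=; first by rewrite eq_sym; case: (i == b).
case: (a == b) => //; rewrite IH eqSS ltnS.
by case: ifP => _ //; case: ifP.
Qed.

End CommonPrefix.

Section Words.
Variable d : nat.
Implicit Types s t : seq 'I_d.

Lemma is_child_rcons s i : is_child s (rcons s i).
Proof. by rewrite /is_child size_rcons eqxx /= -cats1 take_size_cat. Qed.

Lemma is_childP i0 s t : is_child s t -> t = rcons s (last i0 t).
Proof.
rewrite /is_child => /andP[/eqP st /eqP sE].
case/lastP: t st sE => [//|t j]; rewrite size_rcons => -[st].
by rewrite -st -cats1 take_size_cat // cats1 => ->; rewrite last_rcons.
Qed.

Lemma is_child_take s t : is_child t s = (s != [::]) && (t == take (size s).-1 s).
Proof.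
rewrite /is_child; case: s => [|a s] /=; first by case: t.
apply/andP/eqP => [[/eqP [st] /eqP ->]|->]; first by rewrite st.
by rewrite size_take /= ltnSn eqxx.
Qed.

Lemma is_child_asym s t : is_child s t -> is_child t s = false.
Proof.
by rewrite /is_child => /andP[/eqP st _]; apply/negbTE/negP => /andP[/eqP ts _]; lia.
Qed.

End Words.

Section TreeVertices.
Variables d h : nat.
Implicit Types x z : tvert d h.

Definition tvert_of (s : seq 'I_d) (Hs : (size s < h.+1)%N) : tvert d h :=
  existT (fun k : 'I_h.+1 => k.-tuple 'I_d) (Ordinal Hs) (in_tuple s).

Lemma vword_tvert_of s (Hs : (size s < h.+1)%N) : vword (tvert_of Hs) = s.
Proof. by []. Qed.

Lemma size_vword x : (size (vword x) <= h)%N.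
Proof. by case: x => k t; rewrite /vword /= size_tuple -ltnS ltn_ord. Qed.

Lemma vword_inj : injective (@vword d h).
Proof.
move=> [k t] [k' t']; rewrite /vword /= => tt'.
have kk' : k = k' by apply: val_inj; rewrite /= -(size_tuple t) -(size_tuple t') tt'.
by subst k'; congr existT; apply: val_inj.
Qed.

Variable R : realType.
Implicit Type G : seq 'I_d -> R.

Lemma sum_tvert_parent x G :
  \sum_(z : tvert d h | is_child (vword z) (vword x)) G (vword z) =
  if vword x == [::] then 0 else G (take (size (vword x)).-1 (vword x)).
Proof.
case: eqP => [->|/eqP x_root]; first by rewrite big_pred0 // => z; rewrite is_child_take.
have Hs : (size (take (size (vword x)).-1 (vword x)) < h.+1)%N.
  by have := size_vword x; rewrite size_take; case: ifP => _; lia.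
rewrite (big_pred1 (tvert_of Hs)) // => z; rewrite is_child_take x_root /=.
by apply/eqP/eqP => [zx|->]; first by apply: vword_inj.
Qed.

Lemma sum_tvert_children x (i0 : 'I_d) G :
  \sum_(z : tvert d h | is_child (vword x) (vword z)) G (vword z) =
  if (size (vword x) < h)%N then \sum_(i < d) G (rcons (vword x) i) else 0.
Proof.
case: ifP => x_inner; last first.
  rewrite big_pred0 // => z; apply/negbTE/negP => /andP[/eqP zx _].
  by move: (size_vword z) x_inner; rewrite zx; lia.
have Hs i : (size (rcons (vword x) i) < h.+1)%N by rewrite size_rcons ltnS.
rewrite (reindex_onto (fun i => tvert_of (Hs i)) (fun z => last i0 (vword z))).
  by apply: eq_big => [i|i _]; rewrite ?is_child_rcons ?last_rcons ?eqxx.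
by move=> z /(is_childP i0) zx; apply: vword_inj; rewrite vword_tvert_of -zx.
Qed.

Lemma sum_tree_adj x (i0 : 'I_d) G :
  \sum_(z | tree_adj d h x z) G (vword z) =
  (if vword x == [::] then 0 else G (take (size (vword x)).-1 (vword x))) +
  (if (size (vword x) < h)%N then \sum_(i < d) G (rcons (vword x) i) else 0).
Proof.
rewrite -sum_tvert_parent -(sum_tvert_children _ i0) addrC.
rewrite (bigID (fun z => is_child (vword x) (vword z))) /=; congr (_ + _).
  by apply: eq_bigl => z; rewrite /tree_adj; case: is_child; case: is_child.
apply: eq_bigl => z; rewrite /tree_adj.
case zx: (is_child (vword z) (vword x)); last by case: is_child.
by rewrite (is_child_asym zx).
Qed.

End TreeVertices.

Definition tree_avg (R : realType) (d h : nat) (F : seq 'I_d -> R) (t : seq 'I_d) : R :=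
  ((if t == [::] then 0 else F (take (size t).-1 t)) +
   (if (size t < h)%N then \sum_(i < d) F (rcons t i) else 0)) /
  ((if t == [::] then 0 else 1) + (if (size t < h)%N then d%:R else 0)).

Lemma nbr_avg_tree_adj (R : realType) (d h : nat) (F : seq 'I_d -> R) (x : tvert d h) :
  (0 < d)%N -> nbr_avg (tree_adj d h) (F \o vword) x = tree_avg h F (vword x).
Proof.
move=> d_gt0; pose i0 : 'I_d := Ordinal d_gt0.
rewrite /nbr_avg /tree_avg (sum_tree_adj x i0 F).
have := sum_tree_adj x i0 (fun=> 1 : R).
by rewrite (sumr_const [pred z | tree_adj d h x z]) sumr_const card_ord => ->.
Qed.

Section PathTimes.
Variables (R : realType) (d h : nat).

Definition dtree_size (n : nat) : R := \sum_(i < n.+1) d%:R ^+ i.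

(* Expected time to step from a vertex at depth [j] up to its parent. *)
Definition up_time (j : nat) : R := 2 * dtree_size (h - j) - 1.

Definition path_time (a : nat) : R := g h h d - g h a d.

Lemma dtree_size_ge1 n : 1 <= dtree_size n.
Proof.
rewrite /dtree_size big_ord_recl expr0 lerDl.
by apply: sumr_ge0 => i _; rewrite exprn_ge0.
Qed.

Lemma dtree_sizeS n : dtree_size n.+1 = 1 + d%:R * dtree_size n.
Proof.
rewrite /dtree_size big_ord_recl expr0 mulr_sumr; congr (_ + _).
by apply: eq_bigr => i _; rewrite exprS.
Qed.

Lemma dtree_sizeSr n : dtree_size n.+1 = dtree_size n + d%:R ^+ n.+1.
Proof. by rewrite /dtree_size big_ord_recr. Qed.

Lemma g_succ m : g h m.+1 d - g h m d = 2 * \sum_(i < m.+1) d%:R ^+ (h - i) - 1 :> R.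
Proof.
rewrite /g big_ord_recr /= [in RHS]big_ord_recr /=.
have -> : \sum_(i < m) ((2 * m.+1 - 2 * i)%N%:R * d%:R ^+ (h - i)) =
    \sum_(i < m) ((2 * m - 2 * i)%N%:R * d%:R ^+ (h - i)) +
    2 * \sum_(i < m) d%:R ^+ (h - i) :> R.
  rewrite mulr_sumr -big_split; apply: eq_bigr => i _ /=.
  have -> : (2 * m.+1 - 2 * i = (2 * m - 2 * i) + 2)%N by have := ltn_ord i; lia.
  by rewrite natrD mulrDl.
have -> : (2 * m.+1 - 2 * m = 2)%N by lia.
rewrite -natr1; ring.
Qed.

Lemma sum_pow_suffix m : (m < h)%N ->
  \sum_(i < m.+1) d%:R ^+ (h - i) = dtree_size h - dtree_size (h - m.+1) :> R.
Proof.
elim: m => [|m IH] mh.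
  rewrite big_ord1 subn0 subn1 -[in RHS](prednK mh) dtree_sizeSr /= prednK //; ring.
rewrite big_ord_recr /= IH 1?ltnW //.
have -> : (h - m.+1 = (h - m.+2).+1)%N by lia.
rewrite dtree_sizeSr; ring.
Qed.

Lemma g_succ_ge1 m : (0 < d)%N -> 1 <= g h m.+1 d - g h m d :> R.
Proof.
move=> d_gt0; rewrite g_succ big_ord_recl subn0.
have : 1 <= d%:R ^+ h :> R by apply: exprn_ege1; rewrite ler1n.
have : 0 <= \sum_(i < m) d%:R ^+ (h - bump 0 i) :> R.
  by apply: sumr_ge0 => i _; rewrite exprn_ge0.
lra.
Qed.

Lemma path_time_ge0 a : (0 < d)%N -> (a <= h)%N -> 0 <= path_time a.
Proof.
move=> d_gt0 ah; rewrite /path_time -(telescope_sumr (g h ^~ d) ah).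
by apply: sumr_ge0 => m _; apply: le_trans (g_succ_ge1 m d_gt0).
Qed.

Lemma up_time_succ k : (k < h)%N -> up_time k = 1 + d%:R + d%:R * up_time k.+1.
Proof.
move=> kh; rewrite /up_time.
have -> : (h - k = (h - k.+1).+1)%N by lia.
rewrite dtree_sizeS; ring.
Qed.

Lemma up_time_leaf : up_time h = 1.
Proof. by rewrite /up_time subnn /dtree_size big_ord1 expr0; ring. Qed.

Lemma path_time_harmonic k : (0 < d)%N -> (0 < k < h)%N ->
  path_time k.-1 + (path_time k.+1 + (path_time k + up_time k.+1) *+ d.-1) =
  (path_time k - 1) * (1 + d%:R).
Proof.
move=> d_gt0 /andP[]; case: k => // k _ kh /=.
have -> : path_time k = path_time k.+1 + (g h k.+1 d - g h k d) by rewrite /path_time; ring.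
have -> : path_time k.+2 = path_time k.+1 - (g h k.+2 d - g h k.+1 d).
  by rewrite /path_time; ring.
rewrite !g_succ !sum_pow_suffix ?(ltnW kh) // /up_time.
have -> : (h - k.+1 = (h - k.+2).+1)%N by lia.
rewrite dtree_sizeS -[_ *+ d.-1]mulr_natr -subn1 natrB //; ring.
Qed.

Lemma path_time_harmonic_root : (0 < d)%N -> (0 < h)%N ->
  path_time 1 + (path_time 0 + up_time 1) *+ d.-1 = (path_time 0 - 1) * d%:R.
Proof.
move=> d_gt0 h_gt0.
have -> : path_time 1 = path_time 0 - (g h 1 d - g h 0 d) by rewrite /path_time; ring.
rewrite g_succ sum_pow_suffix //.
have -> : dtree_size h = 1 + d%:R * dtree_size (h - 1) by rewrite -dtree_sizeS subn1 prednK.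
rewrite /up_time -[_ *+ d.-1]mulr_natr -subn1 natrB //; ring.
Qed.

End PathTimes.

Lemma eq_one_add_div (F : fieldType) (x s c : F) :
  c != 0 -> s = (x - 1) * c -> x = 1 + s / c.
Proof. by move=> c_neq0 ->; rewrite mulfK // addrC subrK. Qed.

Section TreeHitting.
Variables (R : realType) (d h : nat) (w : seq 'I_d).
Hypotheses (d_gt0 : (0 < d)%N) (size_w : size w = h).

(* Expected hitting time of the target from a depth-[k] vertex whose path to the
   root leaves the path to the target at depth [a]. *)
Definition hit_time (a k : nat) : R :=
  \sum_(a <= j < k) up_time R d h j.+1 + path_time R d h a.

Definition word_hit (t : seq 'I_d) : R := hit_time (lcp t w) (size t).

Lemma hit_timeS a k : (a <= k)%N -> hit_time a k.+1 = hit_time a k + up_time R d h k.+1.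
Proof. by move=> ak; rewrite /hit_time big_nat_recr //=; ring. Qed.

Lemma hit_time_branch a : hit_time a a = path_time R d h a.
Proof. by rewrite /hit_time big_geq // add0r. Qed.

Lemma word_hit_off_path t :
  (lcp t w < size t <= h)%N -> word_hit t = 1 + tree_avg h word_hit t.
Proof.
move=> /andP[lt_at le_th]; rewrite /word_hit /tree_avg.
set k := size t in lt_at le_th *; set a := lcp t w in lt_at *.
have -> : (t == [::]) = false.
  by apply/negbTE/eqP => t_nil; move: lt_at; rewrite /k /a t_nil.
have -> : lcp (take k.-1 t) w = a by rewrite lcp_take; apply/minn_idPr; lia.
have -> : size (take k.-1 t) = k.-1 by rewrite size_take; case: ifP; lia.
have lcp_child i : lcp (rcons t i) w = a by rewrite lcp_rcons -/a -/k; case: eqP; lia.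
under eq_bigr => i _ do rewrite lcp_child size_rcons.
have a_le : (a <= k.-1)%N by lia.
rewrite sumr_const card_ord (hit_timeS (ltnW lt_at)).
rewrite -[in hit_time a k](ltn_predK lt_at) (hit_timeS a_le) (ltn_predK lt_at).
case: (ltnP k h) => [kh|hk].
  apply: eq_one_add_div; first by rewrite nat1r pnatr_eq0.
  by rewrite up_time_succ // -mulr_natr; ring.
have -> : k = h by lia.
by rewrite up_time_leaf !addr0 divr1 addrC.
Qed.

Lemma word_hit_on_path t :
  lcp t w = size t -> (size t < h)%N -> word_hit t = 1 + tree_avg h word_hit t.
Proof.
move=> full kh; pose i0 : 'I_d := Ordinal d_gt0.
rewrite /word_hit /tree_avg full kh.
set k := size t in full kh *; set j0 := nth i0 w k.
have lcp_child i : lcp (rcons t i) w = if j0 == i then k.+1 else k.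
  rewrite lcp_rcons full -/k eqxx size_w kh /= /j0.
  by rewrite (set_nth_default i0) // size_w.
under eq_bigr => i _ do rewrite lcp_child size_rcons -/k.
rewrite (bigD1 j0) //= eqxx.
under eq_bigr => i /negbTE ij do rewrite eq_sym ij.
rewrite (sumr_const (predC1 j0)) cardC1 card_ord !hit_time_branch hit_timeS //.
rewrite hit_time_branch; case: (posnP k) => [k0|k_gt0].
  have -> : t == [::] by rewrite -size_eq0 -/k k0.
  rewrite k0 !add0r; apply: eq_one_add_div; first by rewrite pnatr_eq0 -lt0n.
  by apply: path_time_harmonic_root => //; rewrite -k0.
have -> : (t == [::]) = false by rewrite -size_eq0; apply/negbTE; rewrite -lt0n.
have -> : lcp (take k.-1 t) w = k.-1 by rewrite lcp_take full; apply/minn_idPl; lia.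
have -> : size (take k.-1 t) = k.-1 by rewrite size_take; case: ifP; lia.
rewrite hit_time_branch; apply: eq_one_add_div; first by rewrite nat1r pnatr_eq0.
by apply: path_time_harmonic; rewrite // k_gt0.
Qed.

Lemma word_hit_ge0 t : (size t <= h)%N -> 0 <= word_hit t.
Proof.
move=> th; rewrite /word_hit /hit_time; apply: addr_ge0.
  apply: sumr_ge0 => j _; rewrite /up_time.
  by have := dtree_size_ge1 R d (h - j.+1); lra.
by apply: path_time_ge0 => //; apply: leq_trans (lcp_le_size t w) th.
Qed.

Lemma tree_hit_harmonic (x : tvert d h) :
  vword x != w ->
  word_hit (vword x) = 1 + nbr_avg (tree_adj d h) (word_hit \o vword) x.
Proof.
move=> xw; rewrite nbr_avg_tree_adj //.
have le_s := lcp_le_size (vword x) w; have le_h := size_vword x.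
case: (ltnP (lcp (vword x) w) (size (vword x))) => [lt_s|ge_s].
  by apply: word_hit_off_path; rewrite lt_s le_h.
have full : lcp (vword x) w = size (vword x) by apply/eqP; rewrite eqn_leq le_s.
apply: word_hit_on_path => //; rewrite ltn_neqAle le_h andbT.
by apply: contraNneq xw => xh; rewrite (lcp_full full) xh -size_w take_size.
Qed.

Definition word_dist (t : seq 'I_d) : nat := (size t - lcp t w) + (h - lcp t w).

Lemma tree_descent (x : tvert d h) :
  vword x != w ->
  exists2 z, tree_adj d h x z & (word_dist (vword z) < word_dist (vword x))%N.
Proof.
move=> xw; pose i0 : 'I_d := Ordinal d_gt0; rewrite /word_dist.
set t := vword x in xw *.
have le_h : (size t <= h)%N by apply: size_vword.
have le_s : (lcp t w <= size t)%N by apply: lcp_le_size.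
case: (ltnP (lcp t w) (size t)) => [lt_s|ge_s].
  have Hs : (size (take (size t).-1 t) < h.+1)%N by rewrite size_take; case: ifP; lia.
  exists (tvert_of Hs).
    rewrite /tree_adj vword_tvert_of; apply/orP; right; rewrite is_child_take eqxx andbT.
    by apply/eqP => t_nil; move: lt_s; rewrite /t t_nil.
  rewrite vword_tvert_of lcp_take size_take.
  have -> : minn (size t).-1 (lcp t w) = lcp t w by apply/minn_idPr; lia.
  by case: ifP; lia.
have full : lcp t w = size t by apply/eqP; rewrite eqn_leq le_s.
have kh : (size t < h)%N.
  rewrite ltn_neqAle le_h andbT.
  by apply: contraNneq xw => th; rewrite (lcp_full full) th -size_w take_size.
have Hs : (size (rcons t (nth i0 w (size t))) < h.+1)%N by rewrite size_rcons.
exists (tvert_of Hs); first by rewrite /tree_adj vword_tvert_of is_child_rcons.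
rewrite vword_tvert_of lcp_rcons full eqxx size_w kh size_rcons /=.
by rewrite (set_nth_default i0 (nth i0 w (size t))) ?size_w // eqxx; lia.
Qed.

End TreeHitting.

Theorem mainTheorem8 (R : realType) (d h : nat) (v u : tvert d h) (l : nat) :
  (1 <= d)%N -> (1 <= h)%N ->
  size (vword v) = h ->
  (l <= h)%N ->
  vword u = take (h - l) (vword v) ->
  hitting_time_is (tree_adj d h) u v (g h h d - g h (h - l) d : R).
Proof.
move=> d_gt0 _ size_v lh u_anc.
have neq_v z : z != v -> vword z != vword v by apply: contra => /eqP /vword_inj ->.
have -> : g h h d - g h (h - l) d = word_hit R h (vword v) (vword u).
  rewrite /word_hit u_anc lcp_take lcp_refl size_take size_v.
  rewrite (minn_idPl (leq_subr l h)).
  have -> : (if (h - l < h)%N then (h - l)%N else h) = (h - l)%N by case: ifP; lia.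
  by rewrite hit_time_branch.
apply: (@hitting_time_is_solution _ _ _ _ (word_hit R h (vword v) \o vword)
          (word_dist h (vword v) \o vword)).
- by rewrite /= /word_hit lcp_refl size_v hit_time_branch /path_time subrr.
- by move=> x; apply: word_hit_ge0 => //; apply: size_vword.
- by move=> x /neq_v; apply: tree_hit_harmonic.
- by move=> x /neq_v; apply: tree_descent.
Qed.
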